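(* Let $n\ge 2$, $k\ge0$, $\nu_1,\ldots,\nu_n>0$, and let $(j_1,\ldots,j_{n-1})$ be nonnegative integers with $\sum_{\ell=1}^{n-1}j_\ell=k$. Let \[ \psi_{j_1,\ldots,j_{n-1}} = CK_{n}\Big( \big(K_+^{[n-1]}\big)^{j_{n-1}} CK_{n-1}\Big( \cdots \big(K_+^{[3]}\big)^{j_3} CK_{3}\Big( \big(K_+^{[2]}\big)^{j_2} CK_{2}\big( x_1^{j_1}\big)\Big)\cdots\Big)\Big). \] Then for every $\ell\in\{2,\ldots,n\}$, \[ C_{[\ell]}\,\psi_{j_1,\ldots,j_{n-1}}=\lambda^{[\ell]}_{j_1,\ldots,j_{n-1}}\,\psi_{j_1,\ldots,j_{n-1}},\qquad \lambda^{[\ell]}_{j_1,\ldots,j_{n-1}}=\Big(\sum_{i=1}^{\ell-1}j_i+\sum_{i=1}^{\ell}\nu_i\Big)\Big(-1+\sum_{i=1}^{\ell-1}j_i+\sum_{i=1}^{\ell}\nu_i\Big). \]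
   Context: For a subset $B\subset[n]=\{1,\ldots,n\}$ define the differential operators on $\mathbb{R}[x_1,\ldots,x_n]$: $K_-^B=\sum_{j\in B}\partial_{x_j}$, $K_+^B=\sum_{j\in B}(x_j^2\partial_{x_j}+2\nu_jx_j)$, $K_0^B=\sum_{j\in B}x_j\partial_{x_j}+\sum_{j\in B}\nu_j$, and $C_B=(K_0^B)^2-K_0^B-K_+^BK_-^B$. Write $[m]=\{1,\ldots,m\}$. For $2\le m\le n$, $CK_m$ sends a polynomial $p(x_1,\ldots,x_{m-1})$ to $p(x_1-x_m,\ldots,x_{m-1}-x_m)$; $K_+^{[m]}$ acts on polynomials in $x_1,\ldots,x_m$. The resulting $\psi$ is regarded as a polynomial in $x_1,\ldots,x_n$. *)

From HB Require Import structures.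
From mathcomp Require Import all_boot all_order all_algebra.
From mathcomp Require Import mpoly.
Set Implicit Arguments. Unset Strict Implicit. Unset Printing Implicit Defensive.
Import Order.TTheory GRing.Theory Num.Theory.
Local Open Scope ring_scope.

(* Variables x_1,...,x_n of the paper are 'X_i for i : 'I_n, with the
   0-based shift: x_{a} (paper) = 'X_(a-1). *)
Section Ops.
Variables (R : realFieldType) (n : nat) (nu : 'I_n -> R).

(* the variable with 0-based index a (0 if a >= n) *)
Definition Xv (a : nat) : {mpoly R[n]} := \sum_(i < n | val i == a) 'X_i.

(* [m] = {1,...,m} as a subset of the index set (0-based: indices < m) *)
Definition first (m : nat) : {set 'I_n} := [set i : 'I_n | (val i < m)%N].

Definition Kminus (B : {set 'I_n}) (p : {mpoly R[n]}) : {mpoly R[n]} :=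
  \sum_(i in B) p^`M(i).

Definition Kplus (B : {set 'I_n}) (p : {mpoly R[n]}) : {mpoly R[n]} :=
  \sum_(i in B) ('X_i ^+ 2 * p^`M(i) + (2 * nu i) *: ('X_i * p)).

Definition Kzero (B : {set 'I_n}) (p : {mpoly R[n]}) : {mpoly R[n]} :=
  \sum_(i in B) ('X_i * p^`M(i)) + (\sum_(i in B) nu i) *: p.

Definition Cas (B : {set 'I_n}) (p : {mpoly R[n]}) : {mpoly R[n]} :=
  Kzero B (Kzero B p) - Kzero B p - Kplus B (Kminus B p).

(* CK_m : p(x_1,...,x_{m-1}) |-> p(x_1 - x_m, ..., x_{m-1} - x_m);
   the remaining variables are left unchanged. *)
Definition CK (m : nat) (p : {mpoly R[n]}) : {mpoly R[n]} :=
  p \mPo [tuple (if (val i < m.-1)%N then 'X_i - Xv m.-1 else 'X_i) | i < n].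

Variable j : nat -> nat. (* j_1, ..., j_{n-1} (1-based, other values unused) *)

Fixpoint psi_rec (m : nat) : {mpoly R[n]} :=
  match m with
  | 0 | 1 => Xv 0 ^+ j 1
  | 2 => CK 2 (Xv 0 ^+ j 1)
  | m'.+1 => CK m'.+1 (iter (j m') (Kplus (first m')) (psi_rec m'))
  end.

Definition psi : {mpoly R[n]} := psi_rec n.

Definition lambda (l : nat) : R :=
  let s := (\sum_(1 <= i < l) (j i)%:R) + \sum_(i : 'I_n | (val i < l)%N) nu i in
  s * (-1 + s).

End Ops.

From HB Require Import structures.
From mathcomp Require Import all_boot all_order all_algebra.
From mathcomp Require Import mpoly.
From mathcomp Require Import ring.
Import Order.TTheory GRing.Theory Num.Theory.
Local Open Scope ring_scope.
Set Implicit Arguments. Unset Strict Implicit. Unset Printing Implicit Defensive.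

(* Summed over B, the one-variable operators d/dx, x d/dx + nu, x^2 d/dx + 2 nu x
   give an sl_2-triple: [K_-, K_0] = K_-, [K_-, K_+] = 2 K_0, [K_0, K_+] = K_+.
   Hence C_B commutes with K_+^B, and with K_+^D for D disjoint from B, so with
   K_+^[m] whenever B is contained in [m].  The substitution CK_m translates
   x_1, ..., x_(m-1) by -x_m; it commutes with K_-^B for B inside [m-1] and acts
   on K_0^B, K_+^B as conjugation by exp (x_m K_-^B), which fixes C_B.  If p does
   not involve x_m, then CK_m p is translation invariant in x_1, ..., x_m, hence
   killed by K_-^[m], and K_0^[m] acts on it by its degree plus nu_1 + ... + nu_m;
   so C_[m] = K_0 (K_0 - 1) acts on it by the stated scalar.  Induction on m,
   using that K_+ raises the degree by one, gives every eigenvalue equation. *)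

Section BigCommutator.
Variables (I : finType) (V : zmodType) (A B G : I -> V -> V).
Hypotheses (A_add : forall i, {morph A i : x y / x + y})
           (B_add : forall j, {morph B j : x y / x + y}).
Hypothesis AB : forall i j x, A i (B j x) = B j (A i x) + (if i == j then G i x else 0).

Lemma big_commutator (S S' : {set I}) x :
  \sum_(i in S) A i (\sum_(j in S') B j x)
    = \sum_(j in S') B j (\sum_(i in S) A i x) + \sum_(i in S :&: S') G i x.
Proof.
have morph0 (F : V -> V) : {morph F : y z / y + z} -> F 0 = 0.
  by move=> FD; apply: (addrI (F 0)); rewrite -FD !addr0.
have delta i : \sum_(j in S') (if i == j then G i x else 0)
               = if i \in S' then G i x else 0.
  case: ifPn => [iS'|iNS'].
    rewrite (bigD1 i) //= eqxx big1 ?addr0 // => j /andP[_ /negbTE].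
    by rewrite eq_sym => ->.
  by apply: big1 => j jS'; case: eqP => // ij; rewrite ij jS' in iNS'.
under eq_bigr => i _ do rewrite (big_morph _ (A_add i) (morph0 _ (A_add i))).
under eq_bigr => i _ do under eq_bigr => j _ do rewrite AB.
under eq_bigr => i _ do rewrite big_split.
rewrite big_split exchange_big /=; congr (_ + _).
  by apply: eq_bigr => j _; rewrite (big_morph _ (B_add j) (morph0 _ (B_add j))).
rewrite (eq_bigr _ (fun i _ => delta i)) -big_mkcondr.
by apply: eq_bigl => i; rewrite inE.
Qed.
End BigCommutator.

Section Casimir.
Variable V : zmodType.

Definition casimir (H L E : V -> V) (p : V) : V := H (H p) - H p - E (L p).

Lemma casimirD (H L E : {additive V -> V}) p q :
  casimir H L E (p + q) = casimir H L E p + casimir H L E q.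
Proof.
rewrite /casimir !(raddfD H) (raddfD L) (raddfD E) !opprD.
by rewrite (addrACA (H (H p))) (addrACA (H (H p) - H p)).
Qed.

Lemma casimir_raise (H E : {additive V -> V}) (L : V -> V) :
    (forall p, H (E p) = E (H p) + E p) ->
    (forall p, L (E p) = E (L p) + H p *+ 2) ->
  forall p, casimir H L E (E p) = E (casimir H L E p).
Proof.
move=> HE LE p; rewrite /casimir HE raddfD !HE LE !raddfB raddfD raddfMn addrK.
by rewrite mulr2n !opprD !addrA (addrAC _ (E (H p))) addrK addrAC.
Qed.

Lemma casimir_commute (H L E : V -> V) (F : {additive V -> V}) :
    (forall p, H (F p) = F (H p)) -> (forall p, L (F p) = F (L p)) ->
    (forall p, E (F p) = F (E p)) ->
  forall p, casimir H L E (F p) = F (casimir H L E p).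
Proof. by move=> HF LF EF p; rewrite /casimir !HF LF EF !raddfB. Qed.
End Casimir.

(* [T] acts like conjugation by [exp (c L)], which fixes the Casimir. *)
Lemma casimir_translate (V : comPzRingType) (c : V) (H T : {additive V -> V})
    (L E : V -> V) :
    (forall x, H (c * x) = c * H x) -> (forall p, L (H p) = H (L p) + L p) ->
    (forall p, L (T p) = T (L p)) ->
    (forall p, H (T p) = T (H p) + c * T (L p)) ->
    (forall p, E (T p) = T (E p) + (c * T (H p)) *+ 2 + c ^+ 2 * T (L p)) ->
  forall p, casimir H L E (T p) = T (casimir H L E p).
Proof.
move=> Hc LH LT HT ET p.
by rewrite /casimir LT ET !HT raddfD Hc !HT !raddfB LH raddfD; ring.
Qed.

Section ChainRule.
Variables (R : comNzRingType) (n k : nat).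

Lemma mderivXU (i j : 'I_n) : ('X_j : {mpoly R[n]})^`M(i) = (i == j)%:R.
Proof.
rewrite mderivX mnm1E eq_sym; case: eqP => [->|_]; last by rewrite scale0r.
rewrite scale1r (_ : (U_(j) - U_(j))%MM = 0%MM) ?mpolyX0 //.
by apply/mnmP => l; rewrite mnmBE subnn mnm0E.
Qed.

Lemma mderiv_comp (t : n.-tuple {mpoly R[k]}) (p : {mpoly R[n]}) (i : 'I_k) :
  (p \mPo t)^`M(i) = \sum_(l < n) (p^`M(l) \mPo t) * (tnth t l)^`M(i).
Proof.
pose chain p := forall i : 'I_k,
  (p \mPo t)^`M(i) = \sum_(l < n) (p^`M(l) \mPo t) * (tnth t l)^`M(i).
have chain_const c : chain c%:MP.
  move=> i'; rewrite comp_mpolyC mderivC big1 // => l _.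
  by rewrite mderivC comp_mpolyC mpolyC0 mul0r.
have chainX l : chain 'X_l.
  move=> i'; rewrite comp_mpolyXU -tnth_nth (bigD1 l) //= mderivXU eqxx.
  rewrite big1 ?addr0 ?comp_mpolyC ?mul1r // => l' /negbTE ne.
  by rewrite mderivXU ne comp_mpolyC mpolyC0 mul0r.
have chainM q r : chain q -> chain r -> chain (q * r).
  move=> hq hr i'; rewrite rmorphM mderivM hq hr mulr_suml mulr_sumr -big_split.
  by apply: eq_bigr => l _; rewrite mderivM rmorphD !rmorphM /=; ring.
have chainD q r : chain q -> chain r -> chain (q + r).
  move=> hq hr i'; rewrite raddfD mderivD hq hr -big_split.
  by apply: eq_bigr => l _; rewrite mderivD raddfD mulrDl.
move: i; elim/mpolyind: p => [|c m p _ _ hp]; first exact: (chain_const 0).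
apply: (chainD) => //; rewrite -mul_mpolyC; apply: (chainM) => //.
rewrite mpolyXE_id; apply: (big_ind chain) => [|? ?|l _]; first exact: (chain_const 1).
  exact: (chainM).
by elim: (m l) => [|e IH]; [exact: (chain_const 1) | rewrite exprS; apply: (chainM)].
Qed.
End ChainRule.

Section Operators.
Variables (R : realFieldType) (n : nat) (nu : 'I_n -> R).
Implicit Types (B : {set 'I_n}) (p q : {mpoly R[n]}).

Definition Kzero1 (i : 'I_n) p : {mpoly R[n]} := 'X_i * p^`M(i) + nu i *: p.
Definition Kplus1 (i : 'I_n) p : {mpoly R[n]} :=
  'X_i ^+ 2 * p^`M(i) + (2 * nu i) *: ('X_i * p).
Definition euler p : {mpoly R[n]} := \sum_i 'X_i * p^`M(i).

Lemma Kzero1_is_linear i : linear (Kzero1 i).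
Proof. by move=> a p q; rewrite /Kzero1 mderivD mderivZ -!mul_mpolyC; ring. Qed.
HB.instance Definition _ i :=
  GRing.isLinear.Build R _ _ *:%R (Kzero1 i) (Kzero1_is_linear i).

Lemma Kplus1_is_linear i : linear (Kplus1 i).
Proof. by move=> a p q; rewrite /Kplus1 mderivD mderivZ -!mul_mpolyC; ring. Qed.
HB.instance Definition _ i :=
  GRing.isLinear.Build R _ _ *:%R (Kplus1 i) (Kplus1_is_linear i).

Lemma mderiv_Kzero1 i j q :
  (Kzero1 j q)^`M(i) = Kzero1 j q^`M(i) + (if i == j then q^`M(i) else 0).
Proof.
rewrite /Kzero1 mderivD mderivZ mderivM mderivXU mderiv_comm.
by case: eqVneq => [->|_] /=; rewrite -!mul_mpolyC; ring.
Qed.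

Lemma mderiv_Kplus1 i j q :
  (Kplus1 j q)^`M(i) = Kplus1 j q^`M(i) + (if i == j then Kzero1 i q *+ 2 else 0).
Proof.
rewrite /Kplus1 /Kzero1 expr2 !(mderivD, mderivZ, mderivM) mderivXU mderiv_comm.
by case: eqVneq => [->|_] /=; rewrite -!mul_mpolyC ?mpolyCM; ring.
Qed.

Lemma Xmderiv_Kplus1 i j q :
  'X_i * (Kplus1 j q)^`M(i)
    = Kplus1 j ('X_i * q^`M(i)) + (if i == j then Kplus1 i q else 0).
Proof.
rewrite /Kplus1 expr2 !(mderivD, mderivZ, mderivM) !mderivXU mderiv_comm.
by case: eqVneq => [->|_] /=; rewrite -!mul_mpolyC ?mpolyCM; ring.
Qed.

Lemma Kzero1_Kplus1 i j q :
  Kzero1 i (Kplus1 j q) = Kplus1 j (Kzero1 i q) + (if i == j then Kplus1 i q else 0).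
Proof.
by rewrite /Kzero1 Xmderiv_Kplus1 (raddfD (Kplus1 j)) /= linearZ /= addrAC.
Qed.

Lemma Kplus1C i j q : Kplus1 i (Kplus1 j q) = Kplus1 j (Kplus1 i q).
Proof.
rewrite /Kplus1 expr2 !(mderivD, mderivZ, mderivM) !mderivXU mderiv_comm.
by case: eqVneq => [->|_] /=; rewrite -!mul_mpolyC ?mpolyCM; ring.
Qed.

Lemma KzeroE B p : Kzero nu B p = \sum_(i in B) Kzero1 i p.
Proof. by rewrite /Kzero big_split /= scaler_suml. Qed.

Lemma KplusE B p : Kplus nu B p = \sum_(i in B) Kplus1 i p.
Proof. by []. Qed.

Lemma Kminus_is_linear B : linear (@Kminus R n B).
Proof.
move=> a p q; rewrite /Kminus scaler_sumr -big_split /=.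
by apply: eq_bigr => i _; rewrite mderivD mderivZ.
Qed.
HB.instance Definition _ B :=
  GRing.isLinear.Build R _ _ *:%R (@Kminus R n B) (Kminus_is_linear B).

Lemma Kzero_is_linear B : linear (Kzero nu B).
Proof.
move=> a p q; rewrite !KzeroE scaler_sumr -big_split /=.
by apply: eq_bigr => i _; rewrite linearP.
Qed.
HB.instance Definition _ B :=
  GRing.isLinear.Build R _ _ *:%R (Kzero nu B) (Kzero_is_linear B).

Lemma Kplus_is_linear B : linear (Kplus nu B).
Proof.
move=> a p q; rewrite !KplusE scaler_sumr -big_split /=.
by apply: eq_bigr => i _; rewrite linearP.
Qed.
HB.instance Definition _ B :=
  GRing.isLinear.Build R _ _ *:%R (Kplus nu B) (Kplus_is_linear B).

Lemma euler_is_linear : linear euler.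
Proof.
move=> a p q; rewrite /euler scaler_sumr -big_split /=.
by apply: eq_bigr => i _; rewrite mderivD mderivZ mulrDr scalerAr.
Qed.
HB.instance Definition _ :=
  GRing.isLinear.Build R _ _ *:%R euler euler_is_linear.

Lemma Kminus_Kzero B B' q :
  Kminus B (Kzero nu B' q) = Kzero nu B' (Kminus B q) + Kminus (B :&: B') q.
Proof.
rewrite !KzeroE /Kminus (big_commutator (G := fun i q => q^`M(i))) //.
- by move=> i x y; rewrite mderivD.
- by move=> j x y; rewrite raddfD.
- exact: mderiv_Kzero1.
Qed.

Lemma Kminus_Kplus B B' q :
  Kminus B (Kplus nu B' q) = Kplus nu B' (Kminus B q) + Kzero nu (B :&: B') q *+ 2.
Proof.
rewrite KzeroE /Kminus !KplusE -sumrMnl.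
rewrite (big_commutator (G := fun i q => Kzero1 i q *+ 2)) //.
- by move=> i x y; rewrite mderivD.
- by move=> j x y; rewrite raddfD.
- exact: mderiv_Kplus1.
Qed.

Lemma Kzero_Kplus B B' q :
  Kzero nu B (Kplus nu B' q) = Kplus nu B' (Kzero nu B q) + Kplus nu (B :&: B') q.
Proof.
rewrite !KzeroE !KplusE (big_commutator (G := Kplus1)) //.
- by move=> i x y; rewrite raddfD.
- by move=> j x y; rewrite raddfD.
- exact: Kzero1_Kplus1.
Qed.

Lemma KplusC B B' q : Kplus nu B (Kplus nu B' q) = Kplus nu B' (Kplus nu B q).
Proof.
rewrite !KplusE (big_commutator (G := fun _ _ => 0)) ?big1_eq ?addr0 //.
- by move=> i x y; rewrite raddfD.
- by move=> j x y; rewrite raddfD.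
- by move=> i j x; rewrite if_same addr0 Kplus1C.
Qed.

Lemma euler_Kplus B q : euler (Kplus nu B q) = Kplus nu B (euler q) + Kplus nu B q.
Proof.
have sumT (F : 'I_n -> {mpoly R[n]}) : \sum_i F i = \sum_(i in [set: 'I_n]) F i.
  by apply: eq_bigl => i; rewrite in_setT.
rewrite /euler !KplusE !sumT.
rewrite (big_commutator (A := fun i p => 'X_i * p^`M(i)) (G := Kplus1)) ?setTI //.
- by move=> i x y; rewrite mderivD mulrDr.
- by move=> j x y; rewrite raddfD.
- exact: Xmderiv_Kplus1.
Qed.

Lemma Kzero_set0 q : Kzero nu set0 q = 0.
Proof. by rewrite KzeroE big_set0. Qed.

Lemma mderiv_Kplus i B q : i \notin B -> (Kplus nu B q)^`M(i) = Kplus nu B q^`M(i).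
Proof.
move=> iNB; have := Kminus_Kplus [set i] B q.
rewrite /Kminus !big_set1 => ->.
suff -> : [set i] :&: B = set0 by rewrite Kzero_set0 mul0rn addr0.
by apply/setP => j; rewrite !inE; case: eqP => // ->; rewrite (negbTE iNB).
Qed.

Lemma Kzero_mulX j B p : j \notin B -> Kzero nu B ('X_j * p) = 'X_j * Kzero nu B p.
Proof.
move=> jNB; rewrite !KzeroE mulr_sumr; apply: eq_bigr => i iB.
have /negbTE ij : i != j by apply: contraNneq jNB => <-.
by rewrite /Kzero1 mderivM mderivXU ij mul0r add0r -!mul_mpolyC; ring.
Qed.

Lemma CasE B p : Cas nu B p = casimir (Kzero nu B) (Kminus B) (Kplus nu B) p.
Proof. by []. Qed.

Lemma Cas_Kplus B B' q : B \subset B' ->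
  Cas nu B (Kplus nu B' q) = Kplus nu B' (Cas nu B q).
Proof.
move=> sBB'; set D := B' :\: B.
have KplusB' x : Kplus nu B' x = Kplus nu B x + Kplus nu D x.
  by rewrite !KplusE (big_setID B) /= (setIidPr sBB').
have BD : B :&: D = set0 by rewrite /D setDE setICA setICr setI0.
rewrite !CasE !KplusB' casimirD /=; congr (_ + _).
  by apply: casimir_raise => x /=; rewrite (Kzero_Kplus, Kminus_Kplus) setIid.
apply: casimir_commute => x; last exact: KplusC.
  by rewrite Kzero_Kplus BD (KplusE set0) big_set0 addr0.
by rewrite Kminus_Kplus BD Kzero_set0 mul0rn addr0.
Qed.
End Operators.

Section Translation.
Variables (R : realFieldType) (n : nat) (nu : 'I_n -> R).
Implicit Types (B : {set 'I_n}) (p q : {mpoly R[n]}).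

HB.instance Definition _ k := GRing.RMorphism.copy (@CK R n k) (comp_mpoly _).
HB.instance Definition _ k := GRing.Linear.copy (@CK R n k) (comp_mpoly _).

Lemma XvE (i : 'I_n) : Xv R n i = 'X_i.
Proof. by rewrite /Xv (big_pred1 i) // => j; rewrite val_eqE. Qed.

Variable m : 'I_n.
Local Notation T := (@CK R n m.+1).

Lemma CKX i : T 'X_i = 'X_i - 'X_m *+ (i < m).
Proof.
rewrite /CK comp_mpolyXU -tnth_nth tnth_mktuple /= XvE.
by case: ifP => _; rewrite ?mulr1n ?mulr0n ?subr0.
Qed.

Lemma mderiv_CK p i :
  (T p)^`M(i) = T p^`M(i) - (i == m)%:R * T (Kminus (first n m) p).
Proof.
have -> : (T p)^`M(i) = \sum_l T p^`M(l) * (T 'X_l)^`M(i).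
  rewrite {1}/CK mderiv_comp; apply: eq_bigr => l _.
  by rewrite /CK comp_mpolyXU -tnth_nth.
under eq_bigr => l _ do rewrite CKX mderivB mderivMn !mderivXU mulrBr.
rewrite sumrB (bigD1 i) //= eqxx mulr1 big1 ?addr0; last first.
  by move=> l; rewrite eq_sym => /negbTE ->; rewrite mulr0.
congr (_ - _); rewrite /Kminus raddf_sum mulr_sumr [RHS]big_mkcond /=.
by apply: eq_bigr => l _; rewrite inE; case: (l < m)%N; rewrite ?mulr0 // mulrC.
Qed.

Lemma mderiv_CK_neq p i : i != m -> (T p)^`M(i) = T p^`M(i).
Proof. by move=> /negbTE im; rewrite mderiv_CK im mul0r subr0. Qed.

Section Subset.
Variable B : {set 'I_n}.
Hypothesis sBm : B \subset first n m.

Let lt_pivot i : i \in B -> (i < m)%N.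
Proof. by move=> /(subsetP sBm); rewrite inE. Qed.

Let notin_pivot i : i \in B -> i != m.
Proof. by move=> /lt_pivot lt_im; rewrite -val_eqE neq_ltn lt_im. Qed.

Lemma Kminus_CK p : Kminus B (T p) = T (Kminus B p).
Proof.
by rewrite /Kminus raddf_sum; apply: eq_bigr => i /notin_pivot/mderiv_CK_neq.
Qed.

Lemma Kzero_CK p : Kzero nu B (T p) = T (Kzero nu B p) + 'X_m * T (Kminus B p).
Proof.
rewrite !KzeroE /Kminus !raddf_sum mulr_sumr -big_split; apply: eq_bigr => i iB.
rewrite /Kzero1 mderiv_CK_neq ?notin_pivot // raddfD /= rmorphM linearZ /= CKX.
by rewrite lt_pivot // mulr1n -!mul_mpolyC; ring.
Qed.

Lemma Kplus_CK p : Kplus nu B (T p) =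
  T (Kplus nu B p) + ('X_m * T (Kzero nu B p)) *+ 2 + 'X_m ^+ 2 * T (Kminus B p).
Proof.
rewrite !KplusE KzeroE /Kminus !raddf_sum mulr_sumr -sumrMnl mulr_sumr -!big_split.
apply: eq_bigr => i iB.
rewrite /Kplus1 /Kzero1 mderiv_CK_neq ?notin_pivot // !raddfD /= !linearZ /=.
by rewrite !rmorphM /= CKX lt_pivot // mulr1n -!mul_mpolyC ?mpolyCM; ring.
Qed.

Lemma Cas_CK p : Cas nu B (T p) = T (Cas nu B p).
Proof.
rewrite !CasE; apply: (casimir_translate (c := 'X_m)) => x /=.
- by apply: Kzero_mulX; apply/negP => /notin_pivot; rewrite eqxx.
- by rewrite Kminus_Kzero setIid.
- exact: Kminus_CK.
- exact: Kzero_CK.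
- exact: Kplus_CK.
Qed.
End Subset.

Lemma Kminus_CK_pivot p : Kminus (first n m.+1) (T p) = T p^`M(m).
Proof.
have -> : first n m.+1 = m |: first n m.
  by apply/setP => i; rewrite !inE ltnS leq_eqVlt -val_eqE.
rewrite /Kminus big_setU1 ?inE ?ltnn //= -/(Kminus _ (T p)) Kminus_CK //.
by rewrite mderiv_CK eqxx mul1r subrK.
Qed.

Lemma euler_CK p : euler (T p) = T (euler p).
Proof.
rewrite /euler raddf_sum /=.
under eq_bigr => i _ do rewrite mderiv_CK mulrBr.
under [RHS]eq_bigr => i _ do rewrite rmorphM /= CKX mulrBl.
rewrite !sumrB; congr (_ - _).
rewrite (bigD1 m) //= eqxx mul1r big1 ?addr0 => [|i /negbTE ->]; last first.
  by rewrite mul0r mulr0.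
rewrite /Kminus raddf_sum mulr_sumr big_mkcond /=.
by apply: eq_bigr => i _; rewrite inE; case: (i < m)%N; rewrite ?mul0r // mulr1n.
Qed.
End Translation.

Section Weights.
Variables (R : realFieldType) (n : nat) (nu : 'I_n -> R).
Implicit Types (B : {set 'I_n}) (p q : {mpoly R[n]}).

Definition in_first_vars (k : nat) p := forall i : 'I_n, (k <= i)%N -> p^`M(i) = 0.

Lemma subset_first k l : (l <= k)%N -> first n l \subset first n k.
Proof. by move=> le_lk; apply/subsetP => i; rewrite !inE => /leq_trans; apply. Qed.

Lemma CK_in_first_vars (m : 'I_n) p :
  in_first_vars m p -> in_first_vars m.+1 (CK m.+1 p).
Proof.
move=> pm i lt_mi; rewrite mderiv_CK_neq ?pm ?raddf0 ?(ltnW lt_mi) //.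
by rewrite -val_eqE neq_ltn lt_mi orbT.
Qed.

Lemma iter_Kplus_in_first_vars k B l p : B \subset first n k ->
  in_first_vars k p -> in_first_vars k (iter l (Kplus nu B) p).
Proof.
move=> sBk pk; elim: l => //= l IH i le_ki; rewrite mderiv_Kplus ?IH ?raddf0 //.
by apply: contraL le_ki => /(subsetP sBk); rewrite inE -ltnNge.
Qed.

Lemma euler_iter_Kplus B l d p : euler p = d *: p ->
  euler (iter l (Kplus nu B) p) = (d + l%:R) *: iter l (Kplus nu B) p.
Proof.
move=> Ep; elim: l => [|l IH] /=; first by rewrite addr0.
by rewrite euler_Kplus IH linearZ /= -natr1 addrA !scalerDl scale1r.
Qed.

Lemma Cas_iter_Kplus B B' l c p : B \subset B' -> Cas nu B p = c *: p ->
  Cas nu B (iter l (Kplus nu B') p) = c *: iter l (Kplus nu B') p.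
Proof.
by move=> sBB' Cp; elim: l => //= l IH; rewrite Cas_Kplus // IH linearZ.
Qed.

Lemma Kzero_in_first_vars k p : in_first_vars k p ->
  Kzero nu (first n k) p = euler p + (\sum_(i in first n k) nu i) *: p.
Proof.
move=> pk; congr (_ + _); rewrite /euler [RHS](bigID (mem (first n k))) /=.
rewrite [X in _ + X]big1 ?addr0 // => i.
by rewrite inE -leqNgt => /pk ->; rewrite mulr0.
Qed.

Lemma Cas_lowest_weight B p s : Kminus B p = 0 -> Kzero nu B p = s *: p ->
  Cas nu B p = (s * (-1 + s)) *: p.
Proof.
move=> Lp Hp; rewrite /Cas Lp raddf0 subr0 Hp linearZ /= Hp scalerA -scalerBl.
by congr (_ *: _); ring.
Qed.

Lemma Cas_CK_pivot (m : 'I_n) d q : in_first_vars m q -> euler q = d *: q ->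
  Cas nu (first n m.+1) (CK m.+1 q) =
  ((d + \sum_(i in first n m.+1) nu i) * (-1 + (d + \sum_(i in first n m.+1) nu i)))
    *: CK m.+1 q.
Proof.
move=> qm qd; apply: Cas_lowest_weight; first by rewrite Kminus_CK_pivot qm ?raddf0.
rewrite Kzero_in_first_vars; last exact: CK_in_first_vars.
by rewrite euler_CK qd linearZ scalerDl.
Qed.

Lemma euler_mul p q : euler (p * q) = euler p * q + p * euler q.
Proof.
rewrite /euler mulr_suml mulr_sumr -big_split /=; apply: eq_bigr => i _.
by rewrite mderivM; ring.
Qed.

Lemma euler_Xn (i : 'I_n) k :
  euler ('X_i ^+ k) = k%:R *: ('X_i ^+ k : {mpoly R[n]}).
Proof.
have EX : euler 'X_i = 'X_i :> {mpoly R[n]}.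
  rewrite /euler (bigD1 i) //= mderivXU eqxx mulr1 big1 ?addr0 // => l /negbTE li.
  by rewrite mderivXU li mulr0.
elim: k => [|k IH].
  by rewrite expr0 scale0r /euler big1 // => l _; rewrite -mpolyC1 mderivC mulr0.
by rewrite exprS euler_mul EX IH -scalerAr -natr1 scalerDl scale1r addrC.
Qed.
End Weights.

Section Psi.
Variables (R : realFieldType) (n : nat) (nu : 'I_n -> R) (j : nat -> nat).

Definition psi_deg m : R := \sum_(1 <= i < m) (j i)%:R.

Lemma lambdaE l : lambda nu j l =
  (psi_deg l + \sum_(i in first n l) nu i) *
  (-1 + (psi_deg l + \sum_(i in first n l) nu i)).
Proof. by rewrite /lambda (eq_bigl (fun i => i \in first n l)) // => i; rewrite inE. Qed.

Lemma psi_recS m : (2 <= m)%N ->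
  psi_rec nu j m.+1 = CK m.+1 (iter (j m) (Kplus nu (first n m)) (psi_rec nu j m)).
Proof. by case: m => [|[|m]]. Qed.

Lemma psi_rec2_spec : (2 <= n)%N ->
  [/\ in_first_vars 2 (psi_rec nu j 2),
      euler (psi_rec nu j 2) = psi_deg 2 *: psi_rec nu j 2
    & Cas nu (first n 2) (psi_rec nu j 2) = lambda nu j 2 *: psi_rec nu j 2].
Proof.
move=> n_ge2; pose x1 : 'I_n := Ordinal (ltnW n_ge2).
pose pivot : 'I_n := Ordinal n_ge2.
have x1k_vars : in_first_vars 1 ('X_x1 ^+ j 1 : {mpoly R[n]}).
  move=> i i_ge1; have /negbTE x1i : x1 != i by rewrite -val_eqE neq_ltn i_ge1.
  by rewrite mpolyXn mderivX mulmnE mnm1E x1i mul0n scale0r.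
have x1k_deg : euler ('X_x1 ^+ j 1) = psi_deg 2 *: ('X_x1 ^+ j 1 : {mpoly R[n]}).
  by rewrite euler_Xn /psi_deg big_nat1.
have -> : psi_rec nu j 2 = CK pivot.+1 ('X_x1 ^+ j 1) by rewrite -(XvE R x1).
split.
- exact: (CK_in_first_vars (m := pivot) x1k_vars).
- by rewrite euler_CK x1k_deg linearZ.
- by rewrite (Cas_CK_pivot (m := pivot) _ x1k_vars x1k_deg) lambdaE.
Qed.

Lemma psi_rec_spec m : (2 <= m <= n)%N ->
  [/\ in_first_vars m (psi_rec nu j m),
      euler (psi_rec nu j m) = psi_deg m *: psi_rec nu j m
    & forall l, (2 <= l <= m)%N ->
        Cas nu (first n l) (psi_rec nu j m) = lambda nu j l *: psi_rec nu j m].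
Proof.
elim: m => // m IH /andP[m_ge1 lt_mn].
have [m_lt2|m_ge2] := ltnP m 2.
  have m1 : m = 1%N by apply/eqP; rewrite eqn_leq -ltnS m_lt2.
  subst m; have [V E C] := psi_rec2_spec lt_mn; split=> // l /andP[l_ge2 l_le2].
  by rewrite (_ : l = 2%N) ?C //; apply/eqP; rewrite eqn_leq l_le2.
have [V E C] := IH (introT andP (conj m_ge2 (ltnW lt_mn))).
pose pivot : 'I_n := Ordinal lt_mn.
set q := iter (j m) (Kplus nu (first n m)) (psi_rec nu j m).
have Vq : in_first_vars pivot q by apply: iter_Kplus_in_first_vars.
have qd : euler q = psi_deg m.+1 *: q.
  by rewrite (euler_iter_Kplus _ _ _ E) /psi_deg big_nat_recr // ltnW.
rewrite psi_recS //; split.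
- exact: (CK_in_first_vars Vq).
- by rewrite (euler_CK pivot) qd linearZ.
move=> l /andP[l_ge2]; rewrite leq_eqVlt ltnS => /orP[/eqP->|le_lm].
  by rewrite (Cas_CK_pivot _ Vq qd) lambdaE.
have l_range : (2 <= l <= m)%N by rewrite l_ge2.
rewrite (@Cas_CK _ _ nu pivot) ?subset_first //.
by rewrite (Cas_iter_Kplus _ (subset_first _ le_lm) (C l l_range)) linearZ.
Qed.
End Psi.

Theorem theorem3p4 (R : realFieldType) (n k : nat) (nu : 'I_n -> R)
    (j : nat -> nat) :
  (2 <= n)%N ->
  (forall i, 0 < nu i) ->
  (\sum_(1 <= l < n) j l)%N = k ->
  forall l : nat, (2 <= l <= n)%N ->
    Cas nu (first n l) (psi nu j) = lambda nu j l *: psi nu j.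
Proof.
(* The identity is purely algebraic: positivity of nu and the value of k play no role. *)
move=> n_ge2 _ _ l l_range.
have n_range : (2 <= n <= n)%N by rewrite n_ge2 leqnn.
by have [_ _ ->] := psi_rec_spec nu j n_range.
Qed.
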